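(* Consider the Galton–Watson process with types $\{1,2,\dots\}$ and progeny generating functions $P_i(\boldsymbol s)=\tfrac{19}{30}s_{i+1}^3+\tfrac{11}{30}$ for $i\ne10$ and $P_{10}(\boldsymbol s)=\tfrac25 s_{10}^4+\tfrac15 s_{11}^4+\tfrac25$. Then $\bar\nu=\lim_{k\to\infty}\mathrm{sp}(M^{(k)})=1.6>1$, and the partial extinction probabilities satisfy $\tilde q_i<1$ for $1\le i\le10$ and $\tilde q_i=1$ for $i\ge11$.
   Context: A Galton–Watson process with types $\{1,2,\dots\}$ is $\{\mathcal Z_n=(Z_{n1},Z_{n2},\dots)\}$, $Z_{n\ell}$ the number of type-$\ell$ individuals in generation $n$, started from one individual of type $\varphi_0$; $P_i(\boldsymbol s)$ is the probability generating function of the offspring vector of a type-$i$ individual, $M_{ij}=\partial P_i/\partial s_j|_{\boldsymbol s=\boldsymbol 1}$, $M^{(k)}=(M_{ij})_{1\le i,j\le k}$, and $\mathrm{sp}$ is the spectral radius. Partial extinction: $\tilde q_i=\mathbb P[\forall\ell:\lim_n Z_{n\ell}=0\mid\varphi_0=i]$. *)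

From HB Require Import structures.
From mathcomp Require Import all_boot all_order all_algebra.
From mathcomp Require Import all_classical all_reals all_analysis.
From mathcomp Require Import complex.
Set Implicit Arguments. Unset Strict Implicit. Unset Printing Implicit Defensive.
Import Order.TTheory GRing.Theory Num.Theory numFieldNormedType.Exports.
Local Open Scope classical_set_scope.
Local Open Scope ring_scope.

(* Offspring laws with finitely many outcomes.  Types are natural numbers    *)
(* (the paper's types are 1,2,...).  [off t] is the list of pairs            *)
(* (p, c): with probability p a type-t individual has the children whose     *)
(* types form the multiset c.  The progeny p.g.f. of type t is then          *)
(*   P_t(s) = \sum_(o <- off t) o.1 * \prod_(u <- o.2) s_u.                 *)
Definition offspring_law (R : realType) := nat -> seq (R * seq nat).

Definition pgf (R : realType) (off : offspring_law R) (t : nat) (s : nat -> R) : R :=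
  \sum_(o <- off t) o.1 * \prod_(u <- o.2) s u.

(* All joint outcomes (probability, multiset of children) of a population,
   given as the list of the types of its individuals, each individual
   reproducing independently. *)
Fixpoint outcomes (R : realType) (off : offspring_law R) (s : seq nat)
  : seq (R * seq nat) :=
  match s with
  | [::] => [:: (1, [::])]
  | t :: s' => [seq (o.1 * o'.1, o.2 ++ o'.2) | o <- off t, o' <- outcomes off s']
  end.

Definition gw_kernel (R : realType) (off : offspring_law R) (s s' : seq nat) : R :=
  \sum_(o <- outcomes off s | perm_eq o.2 s') o.1.

(* Z n w l = Z_{n l}(w): number of type-l individuals in generation n.
   [is_GW_from off i P Z]: Z is a Galton--Watson process with offspring
   laws [off], started from one individual of type i (phi_0 = i): every
   Z_{n l} is a random variable and the finite-dimensional distributions are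
   those of the Markov chain with the branching kernel. *)
Definition is_GW_from (R : realType) (off : offspring_law R) (i : nat)
  (d : measure_display) (T : measurableType d) (P : probability T R)
  (Z : nat -> T -> nat -> nat) : Prop :=
  (forall n l m, measurable [set w | Z n w l = m]) /\
  (forall (n : nat) (ss : nat -> seq nat),
     P [set w | forall k, (k <= n)%N -> forall l, Z k w l = count_mem l (ss k)]
     = ((perm_eq (ss 0%N) [:: i])%:R * \prod_(k < n) gw_kernel off (ss k) (ss k.+1))%:E).

(* Partial extinction: for every type l (l >= 1), lim_n Z_{n l} = 0
   (for a nat-valued sequence: eventually 0). *)
Definition partial_extinction (T : Type) (Z : nat -> T -> nat -> nat) : set T :=
  [set w | forall l, (0 < l)%N -> exists N, forall n, (N <= n)%N -> Z n w l = 0%N].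

(* Mean matrix M_{ij} = dP_i/ds_j (1) = expected number of type-j children. *)
Definition mean_entry (R : realType) (off : offspring_law R) (i j : nat) : R :=
  \sum_(o <- off i) o.1 * (count_mem j o.2)%:R.

(* M^(k) = (M_{ij})_{1 <= i,j <= k}  (index shift: row r : 'I_k is type r+1). *)
Definition trunc_mean (R : realType) (off : offspring_law R) (k : nat) : 'M[R]_k :=
  \matrix_(r < k, c < k) mean_entry off r.+1 c.+1.

(* Spectral radius of a real square matrix: the largest modulus of its
   complex eigenvalues (0 for the empty matrix). *)
Definition specrad (R : realType) (k : nat) (A : 'M[R]_k) : R :=
  sup [set ComplexField.Normc.normc lam | lam in
        [set lam : complex R |
          eigenvalue (map_mx (fun x : R => Complex x 0) A) lam]].

Definition ex_off (R : realType) : offspring_law R := fun t =>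
  if t == 10%N then [:: (2/5, nseq 4 10%N); (1/5, nseq 4 11%N); (2/5, [::])]
  else [:: (19/30, nseq 3 t.+1); (11/30, [::])].

From HB Require Import structures.
From mathcomp Require Import all_boot all_order all_algebra.
From mathcomp Require Import all_classical all_reals all_analysis.
From mathcomp Require Import ring lra complex.
Import Order.TTheory GRing.Theory Num.Theory numFieldNormedType.Exports.
Set Implicit Arguments. Unset Strict Implicit. Unset Printing Implicit Defensive.
Local Open Scope classical_set_scope.
Local Open Scope ring_scope.

(* Summing over the finitely many possible trajectories of the first n generations,
   the probability that generation n contains no individual of type l is the n-th
   iterate of the progeny p.g.f., evaluated at the indicator of the types other than l
   and read off at the initial type.  In the example, generation n of a process started
   at a type t >= 11 can only contain type t + n, so every type eventually dies out.
   Started at t <= 10, all descendants are of type 10 after 10 - t generations, and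
   the iterates at type 10 stay below 4/5 because 4/5 is mapped below itself; hence
   type 10 survives with probability at least 1/5.  The mean matrix is upper
   triangular with the single nonzero diagonal entry M_{10,10} = 8/5, which gives
   the spectral radius of every truncation M^(k), k >= 10. *)

Section Trajectories.
Variables (R : realType) (off : offspring_law R).

Definition canon_pop (s : seq nat) : seq nat := sort leq s.

Definition next_pops (s : seq nat) : seq (seq nat) :=
  undup [seq canon_pop o.2 | o <- outcomes off s].

Fixpoint trajectories (M : nat) (s : seq nat) : seq (seq (seq nat)) :=
  if M is M'.+1 then [seq s :: q | s' <- next_pops s, q <- trajectories M' s']
  else [:: [:: s]].

Fixpoint traj_weight (p : seq (seq nat)) : R :=
  if p is s :: q then (if q is s' :: _ then gw_kernel off s s' * traj_weight q else 1)
  else 1.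

Fixpoint pgf_iter (y : nat -> R) (M : nat) : nat -> R :=
  if M is M'.+1 then fun t => pgf off t (pgf_iter y M') else y.

Lemma sum_outcomes_prod (f : nat -> R) s :
  \sum_(o <- outcomes off s) o.1 * \prod_(u <- o.2) f u = \prod_(t <- s) pgf off t f.
Proof.
elim: s => [|t s IH] /=; first by rewrite big_seq1 !big_nil mulr1.
rewrite big_allpairs_dep big_cons /pgf -IH big_distrl /=.
apply: eq_bigr => o _; rewrite big_distrr /=; apply: eq_bigr => o' _.
by rewrite big_cat /= mulrACA.
Qed.

Lemma sorted_canon_pop s : sorted leq (canon_pop s).
Proof. exact: (sort_sorted leq_total). Qed.

Lemma perm_eq_canon_pop a b : perm_eq a (canon_pop b) = (canon_pop b == canon_pop a).
Proof.
have canon_popK : canon_pop (canon_pop b) = canon_pop b.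
  exact: (sorted_sort leq_trans (sorted_canon_pop b)).
apply/idP/idP => [|/eqP eq_ab]; last first.
  apply/(perm_sortP leq_total leq_trans anti_leq).
  by rewrite -/(canon_pop a) -/(canon_pop (canon_pop b)) canon_popK.
move/(perm_sortP leq_total leq_trans anti_leq).
by rewrite -/(canon_pop a) -/(canon_pop (canon_pop b)) canon_popK => ->.
Qed.

(* Groups the outcomes of [s] by the next generation they produce. *)
Lemma sum_next_pops (G : seq nat -> R) s :
  (forall a b, perm_eq a b -> G a = G b) ->
  \sum_(s' <- next_pops s) gw_kernel off s s' * G s' =
  \sum_(o <- outcomes off s) o.1 * G o.2.
Proof.
move=> G_perm; rewrite /gw_kernel /next_pops.
transitivity (\sum_(s' <- undup [seq canon_pop o.2 | o <- outcomes off s])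
   \sum_(o <- outcomes off s) (if perm_eq o.2 s' then o.1 * G o.2 else 0)).
  apply: eq_bigr => s' _; rewrite big_distrl /= big_mkcond /=.
  by apply: eq_bigr => o _; case: ifP => // /G_perm ->.
rewrite exchange_big /=; apply: eq_big_seq => o o_in; rewrite -big_mkcond -big_filter /=.
suff -> : [seq s' <- undup [seq canon_pop o0.2 | o0 <- outcomes off s] | perm_eq o.2 s']
          = [:: canon_pop o.2] by rewrite big_seq1.
rewrite (@eq_in_filter _ _ (pred1 (canon_pop o.2))); last first.
  by move=> s'; rewrite mem_undup; case/mapP => o' _ ->; rewrite /= perm_eq_canon_pop.
apply: filter_pred1_uniq; first exact: undup_uniq.
by rewrite mem_undup (map_f (fun o : R * seq nat => canon_pop o.2)).
Qed.

Lemma trajectoriesP M s p :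
  p \in trajectories M s -> exists2 q, p = s :: q & size q = M.
Proof.
elim: M s p => [|M IH] s p /=; first by rewrite inE; move/eqP->; exists [::].
by case/allpairsPdep => s' [q [_ /IH [q' -> <-] ->]]; exists (s' :: q').
Qed.

Lemma nth_last_traj M s p : p \in trajectories M s -> nth [::] p M = last [::] p.
Proof. by case/trajectoriesP => q -> size_q; rewrite -nth_last /= size_q. Qed.

Lemma sum_trajectories_prod y M s :
  \sum_(p <- trajectories M s) traj_weight p * \prod_(u <- last [::] p) y u =
  \prod_(t <- s) pgf_iter y M t.
Proof.
elim: M s => [|M IH] s /=; first by rewrite big_seq1 /= mul1r.
rewrite big_allpairs_dep /= -sum_outcomes_prod.
rewrite -(sum_next_pops (G := fun x => \prod_(u <- x) pgf_iter y M u)); last first.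
  by move=> a b; apply: perm_big.
apply: eq_bigr => s' _; rewrite -IH big_distrr /= big_seq [RHS]big_seq.
by apply: eq_bigr => q /trajectoriesP [q' -> _]; rewrite /= mulrA.
Qed.

Lemma all_sorted_trajectories M s p :
  sorted leq s -> p \in trajectories M s -> all (sorted leq) p.
Proof.
elim: M s p => [|M IH] s p sorted_s /=; first by rewrite inE; move/eqP-> => /=; rewrite sorted_s.
case/allpairsPdep => s' [q [s's q_traj ->]] /=; rewrite sorted_s /=.
apply: IH q_traj; move: s's; rewrite mem_undup; case/mapP => o _ ->.
exact: sorted_canon_pop.
Qed.

Lemma uniq_trajectories M s : uniq (trajectories M s).
Proof.
elim: M s => [|M IH] s //=.
apply: allpairs_uniq_dep => [||[a qa] [b qb]]; first exact: undup_uniq.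
  by move=> s' _; apply: IH.
move=> /allpairsPdep [a' [qa' [_ /trajectoriesP [q1 -> _] [-> ->]]]].
by move=> /allpairsPdep [b' [qb' [_ /trajectoriesP [q2 -> _] [-> ->]]]] [-> ->].
Qed.

Lemma traj_weightE p :
  traj_weight p = \prod_(k < (size p).-1) gw_kernel off (nth [::] p k) (nth [::] p k.+1).
Proof.
elim: p => [|s [|s' q] IH] /=; rewrite ?big_ord0 //.
by rewrite big_ord_recl -IH.
Qed.

Hypothesis pgf1 : forall t, pgf off t (fun=> 1) = 1.

Lemma pgf_iter1 M : pgf_iter (fun=> 1) M = fun=> 1.
Proof. by elim: M => //= M ->; apply/funext => t; exact: pgf1. Qed.

Lemma sum_traj_weight1 M s : \sum_(p <- trajectories M s) traj_weight p = 1.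
Proof.
have := sum_trajectories_prod (fun=> 1) M s; rewrite pgf_iter1 !big1_eq => <-.
by apply: eq_bigr => p _; rewrite big1_eq mulr1.
Qed.

Lemma sum_traj_weight_absent M s l :
  \sum_(p <- trajectories M s | count_mem l (last [::] p) == 0%N) traj_weight p
  = \prod_(t <- s) pgf_iter (fun u => (u != l)%:R) M t.
Proof.
rewrite big_mkcond -sum_trajectories_prod; apply: eq_bigr => p _.
have -> : \prod_(u <- last [::] p) ((u != l)%:R : R) = (count_mem l (last [::] p) == 0%N)%:R.
  elim: (last [::] p) => [|u q IH]; first by rewrite big_nil.
  by rewrite big_cons IH /=; case: (u == l); rewrite ?mul0r ?mul1r.
by case: ifP; rewrite ?mulr1 ?mulr0.
Qed.
End Trajectories.

Section GaltonWatsonEvents.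
Variables (R : realType) (off : offspring_law R).
Hypothesis pgf1 : forall t, pgf off t (fun=> 1) = 1.
Variables (d : measure_display) (T : measurableType d) (P : probability T R).
Variables (i : nat) (Z : nat -> T -> nat -> nat).
Hypothesis GW : is_GW_from off i P Z.

Local Notation trajs M := (trajectories off M [:: i]).

Definition cyl M (p : seq (seq nat)) : set T :=
  [set w | forall k, (k <= M)%N -> forall l, Z k w l = count_mem l (nth [::] p k)].

Lemma measurable_cyl M p : measurable (cyl M p).
Proof.
have -> : cyl M p = \bigcap_k \bigcap_l
    (if (k <= M)%N then [set w | Z k w l = count_mem l (nth [::] p k)] else setT).
  apply/seteqP; split => w /= cyl_w; first by move=> k _ l _; case: ifP => // /cyl_w; apply.
  by move=> k kM l; have := cyl_w k I l I; rewrite kM.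
apply: bigcapT_measurable => k; apply: bigcapT_measurable => l.
by case: ifP => _ //; exact: GW.1.
Qed.

Lemma prob_cyl M p : p \in trajs M -> P (cyl M p) = (traj_weight off p)%:E.
Proof.
case/trajectoriesP => q -> size_q.
by rewrite traj_weightE /= size_q /cyl (GW.2 M (nth [::] _)) perm_refl mul1r.
Qed.

(* Generations along a trajectory are sorted, so they are determined by their counts. *)
Lemma cyl_disjoint M p q : p \in trajs M -> q \in trajs M -> p != q ->
  cyl M p `&` cyl M q = set0.
Proof.
move=> p_traj q_traj neq_pq; apply/seteqP; split => // w [cyl_p cyl_q].
case/negP: neq_pq; apply/eqP.
have [p' eq_p size_p] := trajectoriesP p_traj.
have [q' eq_q size_q] := trajectoriesP q_traj.
apply: (@eq_from_nth _ [::]) => [|k]; first by rewrite eq_p eq_q /= size_p size_q.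
rewrite eq_p /= size_p ltnS => kM; rewrite -eq_p.
have sorted_nth r : r \in trajs M -> sorted leq (nth [::] r k).
  move=> r_traj; have [r' eq_r size_r] := trajectoriesP r_traj.
  apply: (all_nthP [::] (all_sorted_trajectories (isT : sorted leq [:: i]) r_traj)).
  by rewrite eq_r /= size_r ltnS.
apply: (sorted_eq leq_trans anti_leq (sorted_nth _ p_traj) (sorted_nth _ q_traj)).
by apply/allP => l _; apply/eqP; rewrite -(cyl_p k kM l) -(cyl_q k kM l).
Qed.

Lemma prob_bigU_cyl M (s : seq (seq (seq nat))) : uniq s -> {subset s <= trajs M} ->
  P (\big[setU/set0]_(p <- s) cyl M p) = (\sum_(p <- s) traj_weight off p)%:E.
Proof.
elim: s => [|p s IH] /=; first by rewrite !big_nil measure0.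
move=> /andP [p_s uniq_s] sub; have sub_s : {subset s <= trajs M}.
  by move=> q q_s; apply: sub; rewrite inE q_s orbT.
rewrite !big_cons measureU.
- by rewrite EFinD -(prob_cyl (sub p (mem_head p s))) -IH.
- exact: measurable_cyl.
- by apply: bigsetU_measurable => q _; exact: measurable_cyl.
rewrite -bigcup_seq setI_bigcupr; apply/seteqP; split => // w [q q_s].
by rewrite (cyl_disjoint (sub p (mem_head p s)) (sub_s q q_s)) //; apply: contraNneq p_s => ->.
Qed.

Lemma prob_traj_event M (E : set T) (Q : pred (seq (seq nat))) :
  measurable E -> (forall p, p \in trajs M -> forall w, cyl M p w -> E w <-> Q p) ->
  P E = (\sum_(p <- trajs M | Q p) traj_weight off p)%:E.
Proof.
move=> mE EQ; set U := \big[setU/set0]_(p <- trajs M) cyl M p.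
have mU : measurable U by apply: bigsetU_measurable => p _; exact: measurable_cyl.
have PU1 : P U = 1%E.
  by rewrite /U prob_bigU_cyl ?uniq_trajectories ?sum_traj_weight1.
have EU : E `&` U = \big[setU/set0]_(p <- [seq p <- trajs M | Q p]) cyl M p.
  rewrite /U -!bigcup_seq setI_bigcupr; apply/seteqP; split => w [p] /=.
    move=> p_traj [Ew cyl_w]; exists p => //=.
    by rewrite mem_filter p_traj andbT; apply/(EQ p p_traj w).
  rewrite mem_filter; case/andP => Qp p_traj cyl_w.
  by exists p => //; split => //; apply/(EQ p p_traj w).
rewrite -big_filter -(@prob_bigU_cyl M) ?filter_uniq ?uniq_trajectories //; last first.
  by move=> p; rewrite mem_filter; case/andP.
rewrite -EU (measureDI P mE mU) [X in (X + _)%E](_ : _ = 0%E) ?add0e //.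
apply/eqP; rewrite eq_le measure_ge0 andbT.
apply: (@le_trans _ _ (P (~` U))); last by rewrite probability_setC // PU1 subee.
by apply: le_measure => //; rewrite inE; [apply: measurableD | apply: measurableC].
Qed.

Lemma prob_type_absent n l :
  P [set w | Z n w l = 0%N] = (pgf_iter off (fun u => (u != l)%:R) n i)%:E.
Proof.
rewrite (@prob_traj_event n _ (fun p => count_mem l (last [::] p) == 0%N) (GW.1 n l 0%N)).
  by rewrite sum_traj_weight_absent // big_seq1.
move=> p p_traj w cyl_w; rewrite /= (cyl_w n (leqnn n) l) (nth_last_traj p_traj).
by split => /eqP.
Qed.

Lemma measurable_partial_extinction : measurable (partial_extinction Z).
Proof.
have -> : partial_extinction Z = \bigcap_l (if (0 < l)%N then
    \bigcup_N \bigcap_n (if (N <= n)%N then [set w | Z n w l = 0%N] else setT) else setT).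
  apply/seteqP; split => w /= ext_w.
    move=> l _; case: ifP => // l_gt0; have [N ZN] := ext_w l l_gt0.
    by exists N => // n _; case: ifP => // /ZN.
  move=> l l_gt0; have := ext_w l I; rewrite l_gt0 => -[N _ ZN]; exists N => n Nn.
  by have := ZN n I; rewrite Nn.
apply: bigcapT_measurable => l; case: ifP => _ //.
apply: bigcupT_measurable => N; apply: bigcapT_measurable => n; case: ifP => _ //.
exact: GW.1.
Qed.
End GaltonWatsonEvents.

Lemma nondecreasing_measure_bigcup_le (d : measure_display) (T : measurableType d) (R : realType)
    (mu : measure T R) (F : nat -> set T) (c : \bar R) :
  (forall n, measurable (F n)) -> {homo F : n m / (n <= m)%N >-> (n <= m)%O} ->
  (forall n, (mu (F n) <= c)%E) -> (mu (\bigcup_n F n) <= c)%E.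
Proof.
move=> mF F_homo F_le.
have cvg_F := nondecreasing_cvg_mu (mu := mu) mF (bigcupT_measurable _ mF) F_homo.
rewrite -(cvg_lim (@ereal_hausdorff R) cvg_F).
by apply: lime_le; [apply/cvg_ex; exists (mu (\bigcup_n F n)) | exact: nearW].
Qed.

Lemma char_poly_trmx (K : comNzRingType) n (A : 'M[K]_n) : char_poly A^T = char_poly A.
Proof.
rewrite /char_poly -[RHS]det_tr; congr (\det _).
by rewrite /char_poly_mx linearB /= tr_scalar_mx map_trmx.
Qed.

Lemma char_poly_upper_trig (K : comNzRingType) n (A : 'M[K]_n) :
  (forall a b : 'I_n, (b < a)%N -> A a b = 0) ->
  char_poly A = \prod_(j < n) ('X - (A j j)%:P).
Proof.
move=> A_upper; rewrite -char_poly_trmx char_poly_trig; last first.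
  by apply/is_trig_mxP => a b ab; rewrite mxE A_upper.
by apply: eq_bigr => j _; rewrite mxE.
Qed.

Section Example.
Variable R : realType.
Local Notation off := (ex_off R).

Lemma ex_pgfE t (f : nat -> R) : pgf off t f =
  if t == 10%N then 2/5 * f 10%N ^+ 4 + 1/5 * f 11%N ^+ 4 + 2/5
  else 19/30 * f t.+1 ^+ 3 + 11/30.
Proof. by rewrite /pgf /ex_off; case: ifP => _; rewrite !big_cons !big_nil /=; ring. Qed.

Lemma ex_pgf1 t : pgf off t (fun=> 1) = 1.
Proof. by rewrite ex_pgfE !expr1n; case: ifP => _; lra. Qed.

Lemma ex_pgf_iter_01 y M t : (forall u, 0 <= y u <= 1) -> 0 <= pgf_iter off y M t <= 1.
Proof.
have pow01 (x : R) k : 0 <= x <= 1 -> 0 <= x ^+ k <= 1.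
  by case/andP => x_ge0 x_le1; rewrite exprn_ge0 ?exprn_ile1.
move=> y01; elim: M t => //= M IH t; rewrite ex_pgfE.
move: (pow01 _ 4 (IH 10%N)) (pow01 _ 4 (IH 11%N)) (pow01 _ 3 (IH t.+1)).
by move=> /andP [? ?] /andP [? ?] /andP [? ?]; case: ifP => _; apply/andP; split; lra.
Qed.

Let absent l (u : nat) : R := (u != l)%:R.

Lemma absent01 l u : 0 <= absent l u <= 1.
Proof. by rewrite /absent; case: (u != l); rewrite ?lexx ?ler01. Qed.

(* 4/5 is mapped below itself by the type-10 p.g.f.: 2/5 (4/5)^4 + 1/5 + 2/5 < 4/5. *)
Lemma ex_absent10_at10 M : pgf_iter off (absent 10) M 10%N <= 4/5.
Proof.
elim: M => [|M IH] /=; first by rewrite /absent /=; lra.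
rewrite ex_pgfE /=; set x := pgf_iter _ _ M 10%N; set z := pgf_iter _ _ M 11%N.
have /andP [x_ge0 x_le1] : 0 <= x <= 1 by exact: ex_pgf_iter_01 (absent01 _).
have /andP [_ z_le1] : 0 <= z ^+ 4 <= 1.
  have /andP [z_ge0 z_le1] : 0 <= z <= 1 by exact: ex_pgf_iter_01 (absent01 _).
  by rewrite exprn_ge0 ?exprn_ile1.
have : x ^+ 4 <= (4/5) ^+ 4 by rewrite lerXn2r // qualifE /=; lra.
rewrite [(4/5) ^+ 4](_ : _ = 256/625 :> R); first lra.
by rewrite !exprS expr0; field.
Qed.

(* Descendants of a type t <= 10 are of type 10 after 10 - t generations,
   and 19/30 (4/5)^3 + 11/30 < 4/5. *)
Lemma ex_absent10_le t n : (t <= 10)%N -> (10 <= t + n)%N ->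
  pgf_iter off (absent 10) n t <= 4/5.
Proof.
elim: n t => [|n IH] t t_le10 t_n.
  have -> : t = 10%N by apply/eqP; rewrite eqn_leq t_le10 -[t]addn0.
  exact: (ex_absent10_at10 0).
have [->|t_neq10] := eqVneq t 10%N; first exact: ex_absent10_at10.
rewrite /= ex_pgfE (negbTE t_neq10); set x := pgf_iter _ _ n t.+1.
have /andP [x_ge0 _] : 0 <= x <= 1 by exact: ex_pgf_iter_01 (absent01 _).
have t_lt10 : (t < 10)%N by rewrite ltn_neqAle t_neq10.
have x_le : x <= 4/5 by rewrite IH // addSnnS.
have : x ^+ 3 <= (4/5) ^+ 3 by rewrite lerXn2r // qualifE /=; lra.
rewrite [(4/5) ^+ 3](_ : _ = 64/125 :> R); first lra.
by rewrite !exprS expr0; field.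
Qed.

(* From a type t >= 11, generation n only contains type t + n. *)
Lemma ex_absent_high l t n : (11 <= t)%N -> (t + n != l)%N ->
  pgf_iter off (absent l) n t = 1.
Proof.
elim: n t => [|n IH] t t_ge11 tn_l /=; first by rewrite addn0 in tn_l; rewrite /absent tn_l.
rewrite ex_pgfE ifN ?IH ?expr1n; first lra.
- exact: ltnW.
- by rewrite addSnnS.
by rewrite neq_ltn orbC (leq_trans _ t_ge11).
Qed.

Section Extinction.
Variables (d : measure_display) (T : measurableType d) (P : probability T R).
Variables (i : nat) (Z : nat -> T -> nat -> nat).
Hypothesis GW : is_GW_from off i P Z.

Lemma ex_partial_extinction_lt1 : (i <= 10)%N -> (P (partial_extinction Z) < 1)%E.
Proof.
move=> i_le10; set H := fun N => [set w | forall n, (N <= n)%N -> Z n w 10%N = 0%N].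
have mH N : measurable (H N).
  have -> : H N = \bigcap_n (if (N <= n)%N then [set w | Z n w 10%N = 0%N] else setT).
    apply/seteqP; split => w /= Hw; first by move=> n _; case: ifP => // /Hw.
    by move=> n Nn; have := Hw n I; rewrite Nn.
  by apply: bigcapT_measurable => n; case: ifP => _ //; exact: GW.1.
have ext_H : partial_extinction Z `<=` \bigcup_N H N.
  by move=> w ext_w; have [N HN] := ext_w 10%N isT; exists N.
have H_homo : {homo H : n m / (n <= m)%N >-> (n <= m)%O}.
  by move=> n m nm; apply/subsetPset => w Hw k mk; apply/Hw/(leq_trans nm).
have PH N : (P (H N) <= (4/5 : R)%:E)%E.
  apply: (@le_trans _ _ (P [set w | Z (N + 10) w 10%N = 0%N])).
    apply: le_measure; rewrite ?inE; [exact: mH | exact: GW.1 |].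
    by move=> w; apply; rewrite leq_addr.
  rewrite (prob_type_absent ex_pgf1 GW) lee_fin; apply: ex_absent10_le => //.
  by rewrite addnA leq_addl.
apply: le_lt_trans (le_measure _ _ _ ext_H) _; rewrite ?inE.
- exact: measurable_partial_extinction GW.
- exact: bigcupT_measurable.
by apply: le_lt_trans (nondecreasing_measure_bigcup_le mH H_homo PH) _; rewrite lte_fin; lra.
Qed.

Lemma measurable_type_present n l : measurable [set w | Z n w l <> 0%N].
Proof.
have -> : [set w | Z n w l <> 0%N] = ~` [set w | Z n w l = 0%N] by [].
exact/measurableC/GW.1.
Qed.

Lemma ex_prob_type_present n l : (11 <= i)%N -> l != (i + n)%N ->
  P [set w | Z n w l <> 0%N] = 0%E.
Proof.
move=> i_ge11 l_neq; have -> : [set w | Z n w l <> 0%N] = ~` [set w | Z n w l = 0%N] by [].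
rewrite probability_setC; last exact: GW.1.
rewrite (prob_type_absent ex_pgf1 GW).
by rewrite ex_absent_high 1?eq_sym ?subee.
Qed.

Lemma ex_partial_extinction1 : (11 <= i)%N -> P (partial_extinction Z) = 1%E.
Proof.
move=> i_ge11; set F := fun l => \bigcup_n
  (if l != (i + n)%N then [set w | Z n w l <> 0%N] else set0).
have mF l : measurable (F l).
  by apply: bigcupT_measurable => n; case: ifP => _ //; exact: measurable_type_present.
have PF : P.-negligible (\bigcup_l F l).
  apply: negligible_bigcup => l; apply: negligible_bigcup => n; case: ifP => l_in.
    apply/negligibleP; first exact: measurable_type_present.
    exact: ex_prob_type_present.
  exact: negligible_set0.
have ext_F : ~` partial_extinction Z `<=` \bigcup_l F l.
  move=> w not_ext; apply: contrapT => not_F; apply: not_ext => l l_gt0.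
  exists l.+1 => n ln; apply: contrapT => Z_ne0; apply: not_F.
  exists l => //; exists n => //.
  have l_neq : l != (i + n)%N by rewrite neq_ltn (leq_trans ln) ?leq_addl.
  by rewrite l_neq.
rewrite -[partial_extinction Z]setCK probability_setC; last first.
  exact/measurableC/(measurable_partial_extinction GW).
rewrite [X in (1 - X)%E](_ : _ = 0%E) ?sube0 //.
apply: measure_negligible; first exact/measurableC/(measurable_partial_extinction GW).
exact: negligibleS ext_F PF.
Qed.
End Extinction.
End Example.

Section ExampleSpectrum.
Variable R : realType.
Local Notation off := (ex_off R).

Lemma ex_mean_entry_lower a b : (b < a)%N -> mean_entry off a b = 0.
Proof.
move=> ba; have neq_b n : (a <= n)%N -> (n == b) = false.
  by move=> an; apply/negbTE; rewrite neq_ltn (leq_trans ba an) orbT.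
rewrite /mean_entry /ex_off; case: eqP => [a10|_];
  by rewrite !big_cons big_nil !count_nseq /= !neq_b ?a10 // !mul0n !mulr0 !addr0.
Qed.

Lemma ex_mean_entry_diag a : mean_entry off a a = if a == 10%N then 8/5 else 0.
Proof.
rewrite /mean_entry /ex_off; case: eqP => [->|_];
  rewrite !big_cons big_nil !count_nseq /=; first lra.
by rewrite (gtn_eqF (ltnSn a)) mul0n !mulr0 !addr0.
Qed.

Lemma ex_eigenvalue k (lam : R[i]) : (10 <= k)%N ->
  eigenvalue (map_mx (fun x : R => Complex x 0) (trunc_mean off k)) lam <->
  lam = 0 \/ lam = Complex (8/5) 0.
Proof.
move=> k_ge10; rewrite eigenvalue_root_char char_poly_upper_trig; last first.
  by move=> a b ba; rewrite !mxE ex_mean_entry_lower.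
rewrite /root horner_prod; split.
  move/prodf_eq0 => [j _]; rewrite hornerXsubC subr_eq0 !mxE ex_mean_entry_diag => /eqP ->.
  by case: ifP => _; [right | left].
have diag_root (j : 'I_k) : lam = Complex (mean_entry off j.+1 j.+1) 0 ->
    (('X - ((map_mx (fun x : R => Complex x 0) (trunc_mean off k)) j j)%:P).[lam] == 0).
  by move=> ->; rewrite hornerXsubC subr_eq0 !mxE.
case=> lam_eq; apply/prodf_eq0.
  exists (Ordinal (ltn_trans (isT : (0 < 9)%N) k_ge10)) => //.
  by apply: diag_root; rewrite ex_mean_entry_diag.
exists (Ordinal (k_ge10 : (9 < k)%N)) => //.
by apply: diag_root; rewrite ex_mean_entry_diag.
Qed.

Lemma ex_specrad k : (10 <= k)%N -> specrad (trunc_mean off k) = 8/5.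
Proof.
move=> k_ge10; rewrite /specrad; set S := [set _ | _ in _].
have S_eq x : S x <-> x = 0 \/ x = 8/5.
  have normc_cpx (r : R) : 0 <= r -> ComplexField.Normc.normc (Complex r 0) = r.
    by move=> r_ge0; rewrite /= expr0n /= addr0 sqrtr_sqr ger0_norm.
  split => [[lam /(@ex_eigenvalue k _ k_ge10) [|] -> <-]|[|] ->].
  - by left; rewrite normc_cpx.
  - by right; rewrite normc_cpx //; lra.
  - by exists 0; [apply/(@ex_eigenvalue k _ k_ge10); left | rewrite normc_cpx].
  exists (Complex (8/5) 0); first by apply/(@ex_eigenvalue k _ k_ge10); right.
  by rewrite normc_cpx //; lra.
have S_ub : ubound S (8/5) by move=> x /S_eq [|] ->; lra.
apply/eqP; rewrite eq_le; apply/andP; split.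
  by apply: ge_sup => //; exists (8/5); apply/S_eq; right.
by apply: (ub_le_sup (ex_intro _ _ S_ub)); apply/S_eq; right.
Qed.
End ExampleSpectrum.

Theorem mainTheorem12 (R : realType) :
  ((fun k : nat => specrad (trunc_mean (ex_off R) k)) @ \oo --> (8 / 5 : R))
  /\ (1 < 8 / 5 :> R)
  /\ (forall (d : measure_display) (T : measurableType d) (P : probability T R)
        (i : nat) (Z : nat -> T -> nat -> nat),
        (0 < i)%N -> is_GW_from (ex_off R) i P Z ->
        ((i <= 10)%N -> (P (partial_extinction Z) < 1)%E) /\
        ((11 <= i)%N -> P (partial_extinction Z) = 1%E)).
Proof.
split; first by apply: cvg_near_cst; exists 10%N => // k /= /ex_specrad.
split; first lra.
move=> d T P i Z _ GW; split.
  exact: ex_partial_extinction_lt1 GW.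
exact: ex_partial_extinction1 GW.
Qed.
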